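(* For any two-element set $E=\{x,y\}\subset\mathbb{N}$ we have $A_E=\{2\}\cup\Pi_x\cup\Pi_y\cup\Pi_{x-y}$.
   Context: $\mathbb{N}=\{1,2,3,\dots\}$; $\Pi$ is the set of primes; for a nonzero integer $z$, $\Pi_z$ is the set of prime divisors of $z$. For a nonempty finite set $E\subseteq\mathbb{N}$, $A_E=\{p\in\Pi:\exists k\in\mathbb{N}\ (E\subseteq\{0,k\}+p\mathbb{Z})\}$, where $\{0,k\}+p\mathbb{Z}=p\mathbb{Z}\cup(k+p\mathbb{Z})$. *)

From Stdlib Require Import ZArith Znumtheory List.
Open Scope Z_scope.

Definition Pi (z : Z) (p : Z) : Prop := prime p /\ (p | z).

(* {0,k} + pZ  =  pZ \/ (k + pZ) *)
Definition in_0k_pZ (k p e : Z) : Prop := (p | e) \/ (p | e - k).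

(* A_E for a finite set E ⊆ N = {1,2,...}, given by a list of its elements:
   A_E = { p prime : exists k in N, E ⊆ {0,k} + pZ } *)
Definition A (E : list Z) (p : Z) : Prop :=
  prime p /\ exists k : Z, 1 <= k /\ forall e, In e E -> in_0k_pZ k p e.

From Stdlib Require Import ZArith Znumtheory List Lia.
Open Scope Z_scope.

(* If x and y both lie in {0,k} + pZ, then either one of them lies in pZ or both
   lie in k + pZ, in which case p | x - y.  Conversely each of these divisibility
   conditions is witnessed by k = x or k = y, and p = 2 always works with k = 1
   since every integer is even or odd. *)

Lemma A_pair (x y p : Z) :
  A (x :: y :: nil) p <->
  prime p /\ exists k, 1 <= k /\ in_0k_pZ k p x /\ in_0k_pZ k p y.
Proof.
  unfold A; split.
  - intros [Hp [k [Hk Hxy]]].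
    split; [exact Hp|]. exists k.
    split; [exact Hk|]. split; apply Hxy; simpl; auto.
  - intros [Hp [k [Hk [Hx Hy]]]].
    split; [exact Hp|]. exists k.
    split; [exact Hk|]. intros e [<-|[<-|[]]]; assumption.
Qed.

Lemma divide_sub_comm (p x y : Z) : (p | x - y) -> (p | y - x).
Proof.
  intros H. replace (y - x) with (- (x - y)) by ring. now apply Z.divide_opp_r.
Qed.

Lemma in_0k_pZ_refl (k p : Z) : in_0k_pZ k p k.
Proof. right. rewrite Z.sub_diag. apply Z.divide_0_r. Qed.

Lemma in_0k_pZ_1_2 (e : Z) : in_0k_pZ 1 2 e.
Proof.
  destruct (Z.Even_or_Odd e) as [[m He]|[m He]].
  - left. exists m. lia.
  - right. exists m. lia.
Qed.

Lemma in_0k_pZ_pair_cases (k p x y : Z) :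
  in_0k_pZ k p x -> in_0k_pZ k p y -> (p | x) \/ (p | y) \/ (p | x - y).
Proof.
  intros [Hx|Hx]; [now left|].
  intros [Hy|Hy]; [now right; left|].
  right; right.
  replace (x - y) with ((x - k) - (y - k)) by ring.
  now apply Z.divide_sub_r.
Qed.

Theorem lemma3p2 (x y : Z) (hx : 1 <= x) (hy : 1 <= y) (hxy : x <> y) :
  forall p : Z,
    A (x :: y :: nil) p <-> (p = 2 \/ Pi x p \/ Pi y p \/ Pi (x - y) p).
Proof.
  intros p. rewrite A_pair. unfold Pi. split.
  - intros [Hp [k [_ [Hx Hy]]]].
    destruct (in_0k_pZ_pair_cases k p x y Hx Hy) as [D|[D|D]]; tauto.
  - intros [->|[[Hp D]|[[Hp D]|[Hp D]]]].
    + split; [exact prime_2|].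
      exists 1. split; [lia|]. split; apply in_0k_pZ_1_2.
    + split; [exact Hp|]. exists y.
      split; [exact hy|]. split; [now left | apply in_0k_pZ_refl].
    + split; [exact Hp|]. exists x.
      split; [exact hx|]. split; [apply in_0k_pZ_refl | now left].
    + split; [exact Hp|]. exists x.
      split; [exact hx|]. split; [apply in_0k_pZ_refl|].
      right. now apply divide_sub_comm.
Qed.
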